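(* Assume the setting and standing assumptions (A1), (A2) described in the context. If $\Psi^-$ is initially positive and $\Psi^+$ has a negative sign change, then the system exhibits microphase separation for every $\Delta\in\mathcal{D}$ (robust microphase separation).
   Context: Let $n,m\ge 1$, $B\in\mathbb{Z}^{n\times m}$, $C\in\mathbb{Z}^{m\times n}$. Given bounds $0\le \Delta_j^-\le \Delta_j^+<\infty$ ($j=1,\dots,m$), let $\mathcal{D}$ be the set of diagonal matrices $\Delta=\mathrm{diag}(\Delta_1,\dots,\Delta_m)$ with $\Delta_j^-\le\Delta_j\le\Delta_j^+$ for all $j$. Let $J_2,J_4\in\mathbb{R}^{n\times n}$ be symmetric. Standing assumptions: (A1) for every $\Delta\in\mathcal{D}$, the matrix $B\Delta C$ is singular and has $n-1$ eigenvalues (counted with multiplicity) with negative real part (so $0$ is a simple eigenvalue), and there is a nonzero vector $v\ge 0$ with $v^\top B=0$; (A2) $J_2$ is indefinite, $J_4$ is negative semidefinite, and there exists $\bar\kappa$ such that $\bar\kappa^2 J_2+\bar\kappa^4 J_4$ is negative definite. For real $\kappa\ge 0$ and $\Delta\in\mathcal{D}$ set $J(\Delta,\kappa)=B\Delta C+\kappa^2 J_2+\kappa^4 J_4$ and let $\rho(\Delta,\kappa)$ be its spectral abscissa (the maximum real part of its eigenvalues). Define $\Psi^-(\kappa)=\min_{\Delta\in\mathcal{D}}\det[-J(\Delta,\kappa)]$ and $\Psi^+(\kappa)=\max_{\Delta\in\mathcal{D}}\det[-J(\Delta,\kappa)]$. A continuous function $f$ on $[0,\infty)$ is initially positive if there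 is $\hat\kappa>0$ with $f>0$ on $(0,\hat\kappa)$; it has a negative sign change if $f(\kappa_1)>0>f(\kappa_2)$ for some $\kappa_1<\kappa_2$. For a given $\Delta\in\mathcal{D}$, the system exhibits microphase separation (MS) if there exists $\hat\kappa>0$ with $\rho(\Delta,\kappa)<0$ for all $\kappa\in(0,\hat\kappa)$, and there exist $\hat\kappa<\kappa_1<\kappa_2$ with $\rho(\Delta,\kappa_1)>0$ and $\rho(\Delta,\kappa_2)<0$. *)

From HB Require Import structures.
From mathcomp Require Import all_boot all_order all_algebra.
From mathcomp Require Import classical_sets boolp reals.
From mathcomp Require Import complex.
Set Implicit Arguments. Unset Strict Implicit. Unset Printing Implicit Defensive.
Import Order.TTheory GRing.Theory Num.Theory.
Local Open Scope ring_scope.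
Local Open Scope classical_set_scope.

Section Defs.
Variable R : realType.

Definition eigenvalue (n : nat) (A : 'M[R]_n) (z : complex R) : Prop :=
  root (map_poly (fun x : R => (x%:C)%C) (char_poly A)) z.

Definition eigen_mset (n : nat) (A : 'M[R]_n) (s : seq (complex R)) : Prop :=
  map_poly (fun x : R => (x%:C)%C) (char_poly A) = \prod_(z <- s) ('X - z%:P).

(* spectral abscissa: the maximum real part of the eigenvalues
   (the set is finite and nonempty for n >= 1, so sup = max) *)
Definition spectral_abscissa (n : nat) (A : 'M[R]_n) : R :=
  sup [set complex.Re z | z in [set z | eigenvalue A z]].

Definition quad (n : nat) (M : 'M[R]_n) (x : 'cV[R]_n) : R := (x^T *m M *m x) ord0 ord0.

Definition symmetric_mx (n : nat) (M : 'M[R]_n) : Prop := M^T = M.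
Definition neg_semidef (n : nat) (M : 'M[R]_n) : Prop := forall x, quad M x <= 0.
Definition neg_def (n : nat) (M : 'M[R]_n) : Prop := forall x, x != 0 -> quad M x < 0.
Definition indefinite (n : nat) (M : 'M[R]_n) : Prop :=
  (exists x, quad M x > 0) /\ (exists y, quad M y < 0).

(* the box D of admissible diagonal matrices, described by their diagonal *)
Definition in_box (m : nat) (dl du d : 'rV[R]_m) : Prop :=
  forall j, dl ord0 j <= d ord0 j <= du ord0 j.

Definition intmx (p q : nat) (M : 'M[int]_(p, q)) : 'M[R]_(p, q) :=
  map_mx (fun z : int => z%:~R) M.

Definition Jmat (n m : nat) (B : 'M[int]_(n, m)) (C : 'M[int]_(m, n))
  (J2 J4 : 'M[R]_n) (d : 'rV[R]_m) (k : R) : 'M[R]_n :=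
  intmx B *m diag_mx d *m intmx C + (k ^+ 2) *: J2 + (k ^+ 4) *: J4.

Definition Psi_minus (n m : nat) (B : 'M[int]_(n, m)) (C : 'M[int]_(m, n))
  (J2 J4 : 'M[R]_n) (dl du : 'rV[R]_m) (k : R) : R :=
  inf [set \det (- Jmat B C J2 J4 d k) | d in [set d | in_box dl du d]].

Definition Psi_plus (n m : nat) (B : 'M[int]_(n, m)) (C : 'M[int]_(m, n))
  (J2 J4 : 'M[R]_n) (dl du : 'rV[R]_m) (k : R) : R :=
  sup [set \det (- Jmat B C J2 J4 d k) | d in [set d | in_box dl du d]].

Definition initially_positive (f : R -> R) : Prop :=
  exists kh, 0 < kh /\ forall k, 0 < k < kh -> f k > 0.

Definition negative_sign_change (f : R -> R) : Prop :=
  exists k1 k2, 0 <= k1 /\ k1 < k2 /\ f k1 > 0 /\ f k2 < 0.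

Definition microphase_separation (rho : R -> R) : Prop :=
  exists kh, 0 < kh /\ (forall k, 0 < k < kh -> rho k < 0) /\
    exists k1 k2, kh < k1 /\ k1 < k2 /\ rho k1 > 0 /\ rho k2 < 0.

End Defs.

From Pilot Require Import Defs.
From HB Require Import structures.
From mathcomp Require Import all_boot all_order all_algebra.
From mathcomp Require Import classical_sets boolp reals.
From mathcomp Require Import complex polyrcf.
From mathcomp Require Import ring lra.
Import Order.TTheory GRing.Theory Num.Theory.
Local Open Scope ring_scope.

(* Fix Delta and write J(k) = A + k^2 J2 + k^4 J4 with A = B Delta C. By (A1) the
   characteristic polynomial of A is X * Q with all roots of Q in Re < 0, and since
   Psi^- > 0 near 0, det (- J(k)) > 0 for small k > 0. The coefficients of the
   characteristic polynomial of J(k) move by O(k), so an eigenvalue of J(k) with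
   Re >= 0 is O(k); positivity of det (- J(k)) then produces a second one, and two
   O(k) roots would make the linear coefficient O(k), although it stays close to
   Q(0) <> 0. Hence rho < 0 for small k. Where Psi^+ < 0 we have det (- J(k)) < 0,
   so det (X - J(k)) has a positive real root and rho > 0. Finally (A2) makes the
   quadratic form of J(k) uniformly negative definite for large k, so rho < 0 there. *)

Set Implicit Arguments.
Unset Strict Implicit.
Unset Printing Implicit Defensive.

Section RealMatrixSpectra.
Variable R : realType.
Local Notation C := (complex R).
Local Notation toC := (real_complex R).
Local Notation Re := (@complex.Re R).
Local Notation Im := (@complex.Im R).
Local Notation cnorm := (@Num.norm R (Rcomplex R)).
Local Notation charC A := (map_poly toC (char_poly A)).

Lemma monic_polyC_split (p : {poly R}) : p \is monic ->
  exists2 r : seq C, size r = (size p).-1 & map_poly toC p = \prod_(z <- r) ('X - z%:P).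
Proof.
move=> p_monic; have [r rE] := closed_field_poly_normal (map_poly toC p).
rewrite (monicP _) ?map_monic // scale1r in rE.
by exists r => //; rewrite -(size_map_poly toC) rE size_prod_XsubC.
Qed.

(* [Defs.eigenvalue] (complex eigenvalues) is shadowed by mathcomp's [eigenvalue]. *)
Lemma eigenvalue_seq n (A : 'M[R]_n) :
  exists2 r : seq C, size r = n & forall z, Defs.eigenvalue A z <-> z \in r.
Proof.
have [r sr rE] := monic_polyC_split (char_poly_monic A).
exists r => [|z]; first by rewrite sr size_char_poly.
by rewrite /Defs.eigenvalue rE root_prod_XsubC.
Qed.

Lemma spectral_abscissa_ge n (A : 'M[R]_n) z :
  Defs.eigenvalue A z -> Re z <= spectral_abscissa A.
Proof.
move=> Az; have [r _ rE] := eigenvalue_seq A.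
apply: sup_upper_bound; last by exists z.
split; first by exists (Re z), z.
exists (\big[Order.max/0]_(w <- r) Re w) => _ [w /rE wr <-].
exact: le_bigmax_seq.
Qed.

Lemma spectral_abscissa_lt n (A : 'M[R]_n) c : (0 < n)%N ->
  (forall z, Defs.eigenvalue A z -> Re z < c) -> spectral_abscissa A < c.
Proof.
move=> n_gt0 Ac; have [r sr rE] := eigenvalue_seq A.
pose b := \big[Order.max/(c - 1)]_(w <- r) Re w.
have b_lt_c : b < c.
  by rewrite /b big_seq; apply: bigmax_lt => [|w /rE/Ac //]; rewrite gtrBl ltr01.
have [w wr] : exists w, w \in r.
  by case: r sr {rE b b_lt_c} n_gt0 => [<-//|w r _ _]; exists w; exact: mem_head.
apply: le_lt_trans b_lt_c; apply: ge_sup; first by exists (Re w), w; first exact/rE.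
by move=> _ [v /rE vr <-]; exact: le_bigmax_seq.
Qed.

Lemma char_poly_horner0 n (A : 'M[R]_n) : (char_poly A).[0] = \det (- A).
Proof. by rewrite horner_coef0 char_poly_det -scaleN1r detZ. Qed.

Lemma monic_root_gt0 (p : {poly R}) : p \is monic -> p.[0] < 0 ->
  exists2 t, 0 < t & root p t.
Proof.
move=> /monicP p_monic p0_lt0.
have [N pN_ge1] : exists N, forall x, N <= x -> 1 <= p.[x].
  by rewrite -p_monic; apply: poly_pinfty_gt_lc; rewrite p_monic ltr01.
pose b := Num.max N 0.
have p0pb_lt0 : p.[0] * p.[b] < 0.
  by rewrite pmulr_llt0 // (lt_le_trans ltr01) // pN_ge1 // le_max lexx.
have b_ge0 : 0 <= b by rewrite le_max lexx orbT.
have [t] := poly_ivtoo b_ge0 p0pb_lt0.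
by rewrite in_itv /= => /andP[t_gt0 _]; exists t.
Qed.

Lemma spectral_abscissa_gt0 n (A : 'M[R]_n) : \det (- A) < 0 -> 0 < spectral_abscissa A.
Proof.
rewrite -char_poly_horner0 => /(monic_root_gt0 (char_poly_monic A))[t t_gt0 At].
have AtC : Defs.eigenvalue A (t%:C)%C.
  by rewrite /Defs.eigenvalue /root horner_map (rootP At) rmorph0.
exact: lt_le_trans t_gt0 (spectral_abscissa_ge AtC).
Qed.

Lemma neg_def_eigenvalue_Re_lt0 n (A : 'M[R]_n) z :
  neg_def A -> Defs.eigenvalue A z -> Re z < 0.
Proof.
move=> A_neg Az.
have : eigenvalue (map_mx toC A) z by rewrite eigenvalue_root_char -map_char_poly.
case/eigenvalueP => v vA v_neq0.
pose a := \col_i Re (v ord0 i); pose b := \col_i Im (v ord0 i).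
have quad_le0 x : quad A x <= 0.
  by have [->|/A_neg/ltW//] := eqVneq x 0; rewrite /quad mulmx0 mxE.
have ab_lt0 : quad A a + quad A b < 0.
  have [a0|/A_neg qa] := eqVneq a 0; last by have := quad_le0 b; lra.
  have [b0|/A_neg qb] := eqVneq b 0; last by have := quad_le0 a; lra.
  case/eqP: v_neq0; apply/rowP => i; rewrite mxE.
  move/matrixP/(_ i ord0): a0; move/matrixP/(_ i ord0): b0; rewrite !mxE.
  by case: (v ord0 i) => ai bi /= -> ->.
have key : quad A a + quad A b =
    Re z * \sum_i (Re (v ord0 i) ^+ 2 + Im (v ord0 i) ^+ 2).
  have /(congr1 (fun w : 'rV_n => Re (\sum_j w ord0 j * (v ord0 j)^*%C))) := vA.
  rewrite !(raddf_sum (@complex.Re R : Rcomplex R -> R)).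
  move=> E; transitivity (\sum_i Re ((z *: v) ord0 i * (v ord0 i)^*%C)); last first.
    rewrite mulr_sumr; apply: eq_bigr => i _; rewrite !mxE.
    by case: (v ord0 i) => ai bi; case: (z) => x y /=; ring.
  rewrite -E /quad !mxE -big_split /=; apply: eq_bigr => j _.
  rewrite !mxE !mulr_suml (raddf_sum (@complex.Re R : Rcomplex R -> R)) -big_split.
  apply: eq_bigr => i _; rewrite !mxE /=.
  by case: (v ord0 i) => ai bi; case: (v ord0 j) => aj bj /=; ring.
move: ab_lt0; rewrite key ltNge; apply: contraNlt => Rez_ge0.
by rewrite mulr_ge0 // sumr_ge0 // => i _; rewrite addr_ge0 ?sqr_ge0.
Qed.

Definition qform n (M : 'I_n -> 'I_n -> R) (x : 'I_n -> R) :=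
  \sum_i \sum_j x i * M i j * x j.

Definition sqnorm n (x : 'I_n -> R) := \sum_i x i ^+ 2.

Lemma sqnorm_ge0 n (x : 'I_n -> R) : 0 <= sqnorm x.
Proof. by rewrite sumr_ge0 // => i _; rewrite sqr_ge0. Qed.

Lemma sqr_le_sqnorm n (x : 'I_n -> R) i : x i ^+ 2 <= sqnorm x.
Proof.
by rewrite /sqnorm (bigD1 i) //= lerDl sumr_ge0 // => j _; rewrite sqr_ge0.
Qed.

Lemma sqnorm_gt0 n (x : 'I_n -> R) i : x i != 0 -> 0 < sqnorm x.
Proof.
by move=> xi; apply: lt_le_trans (sqr_le_sqnorm x i); rewrite exprn_even_gt0.
Qed.

Lemma qform_le n (M : 'I_n -> 'I_n -> R) x :
  qform M x <= (\sum_i \sum_j `|M i j|) * sqnorm x.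
Proof.
rewrite /qform mulr_suml; apply: ler_sum => i _.
rewrite mulr_suml; apply: ler_sum => j _.
have xij : `|x i| * `|x j| <= sqnorm x.
  have := sqr_le_sqnorm x i; have := sqr_le_sqnorm x j.
  rewrite -[x i ^+ 2]real_normK ?num_real // -[x j ^+ 2]real_normK ?num_real //.
  by have := sqr_ge0 (`|x i| - `|x j|); nra.
apply: le_trans (ler_norm _) _; rewrite mulrAC !normrM mulrC.
by rewrite ler_wpM2l.
Qed.

Lemma qform_rank1 n (b x : 'I_n -> R) :
  qform (fun i j => b i * b j) x = (\sum_i b i * x i) ^+ 2.
Proof.
rewrite expr2 mulr_suml; apply: eq_bigr => i _.
by rewrite mulr_sumr; apply: eq_bigr => j _; ring.
Qed.

Lemma qform_sub_rank1 n (M : 'I_n -> 'I_n -> R) (b : 'I_n -> R) a x :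
  qform (fun i j => M i j - b i * b j / a) x =
  qform M x - (\sum_i b i * x i) ^+ 2 / a.
Proof.
rewrite -qform_rank1 mulr_suml -sumrB; apply: eq_bigr => i _.
by rewrite mulr_suml -sumrB; apply: eq_bigr => j _; ring.
Qed.

Section FirstCoordinate.
Variables (n : nat) (M : 'I_n.+1 -> 'I_n.+1 -> R).

Let a := M ord0 ord0.
Let b j := (M ord0 (lift ord0 j) + M (lift ord0 j) ord0) / 2.
Let schur i j := M (lift ord0 i) (lift ord0 j) - b i * b j / a.

Lemma qform_recl x : qform M x =
  a * x ord0 ^+ 2 + 2 * x ord0 * (\sum_j b j * x (lift ord0 j))
  + qform (fun i j => M (lift ord0 i) (lift ord0 j)) (x \o lift ord0).
Proof.
rewrite /qform big_ord_recl big_ord_recl /=.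
under [X in _ + X]eq_bigr => i _ do rewrite big_ord_recl.
rewrite big_split /= mulr_sumr.
have -> : \sum_j 2 * x ord0 * (b j * x (lift ord0 j)) =
    \sum_j x ord0 * M ord0 (lift ord0 j) * x (lift ord0 j) +
    \sum_i x (lift ord0 i) * M (lift ord0 i) ord0 * x ord0.
  by rewrite -big_split; apply: eq_bigr => j _ /=; rewrite /b; field.
rewrite /a; ring.
Qed.

Hypothesis M_neg : forall x, (exists i, x i != 0) -> qform M x < 0.

Let cons0 x0 (y : 'I_n -> R) k := if unlift ord0 k is Some j then y j else x0.

Let cons0_0 x0 y : cons0 x0 y ord0 = x0.
Proof. by rewrite /cons0 unlift_none. Qed.

Let cons0_lift x0 y : cons0 x0 y \o lift ord0 = y.
Proof. by apply: funext => j; rewrite /= /cons0 liftK. Qed.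

Lemma qform_head_lt0 : M ord0 ord0 < 0.
Proof.
have /M_neg : exists i, cons0 1 (fun=> 0) i != 0.
  by exists ord0; rewrite cons0_0 oner_eq0.
rewrite qform_recl cons0_0 cons0_lift /qform !big1 => [|i _|j _]; last 2 first.
- by rewrite big1 // => j _; rewrite mulr0.
- by rewrite /cons0 liftK mulr0.
by rewrite expr1n !mulr1 mulr0 !addr0.
Qed.

Lemma qform_schurE x : qform M x =
  a * (x ord0 + (\sum_j b j * x (lift ord0 j)) / a) ^+ 2 + qform schur (x \o lift ord0).
Proof.
rewrite qform_recl qform_sub_rank1 /=; field.
by rewrite lt_eqF ?qform_head_lt0.
Qed.

Lemma qform_schur_neg y : (exists i, y i != 0) -> qform schur y < 0.
Proof.
move=> [i yi]; pose x0 := - (\sum_j b j * y j) / a.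
have /M_neg : exists i, cons0 x0 y i != 0 by exists (lift ord0 i); rewrite /cons0 liftK.
rewrite qform_schurE cons0_0 cons0_lift /=.
under eq_bigr do rewrite /cons0 liftK.
by rewrite /x0 mulNr addNr expr0n /= mulr0 add0r.
Qed.

End FirstCoordinate.

(* Induction on the dimension, through the Schur complement of the first diagonal entry. *)
Lemma qform_neg_uniform n (M : 'I_n -> 'I_n -> R) :
  (forall x, (exists i, x i != 0) -> qform M x < 0) ->
  exists2 c, 0 < c & forall x, qform M x <= - c * sqnorm x.
Proof.
elim: n M => [|n IH] M M_neg.
  by exists 1 => // x; rewrite /qform /sqnorm !big_ord0 mulr0.
have [c' c'_gt0 schur_le] := IH _ (qform_schur_neg M_neg).
set a := M ord0 ord0 in schur_le *; have a_lt0 : a < 0 := qform_head_lt0 M_neg.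
pose b j := (M ord0 (lift ord0 j) + M (lift ord0 j) ord0) / 2.
pose s (y : 'I_n -> R) := \sum_j b j * y j.
pose K := \sum_i \sum_j `|b i * b j|.
have K_ge0 : 0 <= K by apply: sumr_ge0 => i _; apply: sumr_ge0.
have sK y : s y ^+ 2 <= K * sqnorm y by rewrite -qform_rank1 qform_le.
pose D := 1 + 2 * K / a ^+ 2.
have D_gt0 : 0 < D.
  by have := divr_ge0 (mulr_ge0 (ler0n _ 2) K_ge0) (sqr_ge0 a); rewrite /D; lra.
pose c := Num.min (- a / 2) (c' / D).
have c_gt0 : 0 < c by rewrite lt_min !divr_gt0 ?oppr_gt0.
have c_le_a : 2 * c <= - a by rewrite -ler_pdivlMl // mulrC ge_min lexx.
have cD_le : c * D <= c' by rewrite -ler_pdivlMr // ge_min lexx orbT.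
exists c => // x.
set y := x \o lift ord0; set w := x ord0 + s y / a.
have -> : sqnorm x = x ord0 ^+ 2 + sqnorm y by rewrite /sqnorm big_ord_recl.
have x0_le : x ord0 ^+ 2 <= 2 * w ^+ 2 + (D - 1) * sqnorm y.
  have -> : x ord0 = w - s y / a by rewrite /w addrK.
  have -> : (D - 1) * sqnorm y = 2 * (K * sqnorm y / a ^+ 2) by rewrite /D; ring.
  have t_le : (s y / a) ^+ 2 <= K * sqnorm y / a ^+ 2.
    by rewrite expr_div_n ler_wpM2r ?invr_ge0 ?sqr_ge0.
  by have := sqr_ge0 (w + s y / a); nra.
have -> : qform M x = a * w ^+ 2 + qform _ y := qform_schurE M_neg x.
have := schur_le y; have := sqnorm_ge0 y; have := sqr_ge0 w.
have := ler_wpM2l (ltW c_gt0) x0_le.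
have := ler_wpM2r (sqr_ge0 w) c_le_a; have := ler_wpM2r (sqnorm_ge0 y) cD_le.
nra.
Qed.

Lemma quad_qform n (M : 'M[R]_n) x :
  quad M x = qform (fun i j => M i j) (fun i => x i ord0).
Proof.
rewrite /quad /qform !mxE exchange_big /=; apply: eq_bigr => i _.
by rewrite !mxE mulr_suml; apply: eq_bigr => j _; rewrite !mxE.
Qed.

Lemma quadD n (M N : 'M[R]_n) x : quad (M + N) x = quad M x + quad N x.
Proof. by rewrite /quad mulmxDr mulmxDl mxE. Qed.

Lemma quadZ n a (M : 'M[R]_n) x : quad (a *: M) x = a * quad M x.
Proof. by rewrite /quad -scalemxAr -scalemxAl mxE. Qed.

Lemma col_neq0 n (x : 'cV[R]_n) : x != 0 -> exists i, x i ord0 != 0.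
Proof.
move=> x_neq0; apply/existsP; apply: contraNT x_neq0; rewrite negb_exists.
by move=> /forallP x0; apply/eqP/matrixP => i j; rewrite (ord1 j) mxE; exact/eqP/negPn.
Qed.

Lemma neg_def_uniform n (M : 'M[R]_n) : neg_def M ->
  exists2 c, 0 < c & forall x, quad M x <= - c * sqnorm (fun i => x i ord0).
Proof.
move=> M_neg; have [c c_gt0 Mc] : exists2 c, 0 < c &
    forall y, qform (fun i j => M i j) y <= - c * sqnorm y.
  apply: qform_neg_uniform => y [i yi].
  have -> : y = (fun i => (\col_k y k) i ord0) by apply: funext => k; rewrite mxE.
  rewrite -quad_qform; apply: M_neg; apply/eqP => /matrixP /(_ i ord0).
  by rewrite !mxE; apply/eqP.
by exists c => // x; rewrite quad_qform.
Qed.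

Lemma neg_def_neq0 n (M : 'M[R]_n) : (0 < n)%N -> neg_def M -> M != 0.
Proof.
move=> n_gt0 M_neg; apply/eqP => M0.
have /M_neg : const_mx 1 != 0 :> 'cV[R]_n.
  by apply/eqP => /matrixP /(_ (Ordinal n_gt0) ord0) /eqP; rewrite !mxE oner_eq0.
by rewrite M0 /quad mulmx0 mul0mx mxE ltxx.
Qed.

Lemma neg_def_large n (A J2 J4 : 'M[R]_n) k0 : (0 < n)%N -> neg_semidef J4 ->
    (exists kb, neg_def (kb ^+ 2 *: J2 + kb ^+ 4 *: J4)) ->
  exists2 k, k0 < k & neg_def (A + k ^+ 2 *: J2 + k ^+ 4 *: J4).
Proof.
move=> n_gt0 J4_le [kb Nb_neg].
have [c c_gt0 Nb_le] := neg_def_uniform Nb_neg.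
pose tb := kb ^+ 2.
have tb_gt0 : 0 < tb.
  rewrite exprn_even_gt0 //=; apply: contraNneq (neg_def_neq0 n_gt0 Nb_neg) => ->.
  by rewrite !expr0n /= !scale0r addr0.
pose KA := \sum_i \sum_j `|A i j|.
have KA_ge0 : 0 <= KA by apply: sumr_ge0 => i _; apply: sumr_ge0.
have tKc_ge0 : 0 <= tb * KA / c.
  exact: divr_ge0 (mulr_ge0 (ltW tb_gt0) KA_ge0) (ltW c_gt0).
pose k := 1 + `|k0| + tb + tb * KA / c.
have k_ge1 : 1 <= k by have := normr_ge0 k0; rewrite /k; lra.
have k_le_t : k <= k ^+ 2 by rewrite expr2 ler_peMl // (le_trans ler01).
exists k => [|x x_neq0]; first by have := ler_norm k0; rewrite /k; lra.
have N_gt0 : 0 < sqnorm (fun i => x i ord0).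
  by have [i xi] := col_neq0 x_neq0; exact: (@sqnorm_gt0 _ (fun i => x i ord0) i).
have qA_le : quad A x <= KA * sqnorm (fun i => x i ord0) by rewrite quad_qform qform_le.
have qN_le := Nb_le x.
rewrite (_ : kb ^+ 4 = tb ^+ 2) ?quadD ?quadZ -/tb in qN_le; last by rewrite -exprM.
have q4_le := J4_le x.
rewrite !quadD !quadZ (_ : k ^+ 4 = (k ^+ 2) ^+ 2); last by rewrite -exprM.
set t := k ^+ 2 in k_le_t *; set N := sqnorm _ in N_gt0 qA_le qN_le.
have tb_le_t : tb <= t by have := normr_ge0 k0; rewrite /k in k_le_t *; lra.
have tbKA_lt : tb * KA < t * c.
  rewrite -ltr_pdivrMr //; have := normr_ge0 k0; have := ltW tb_gt0.
  by rewrite /k in k_le_t *; lra.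
(* With qM := quad M x: tb (qA + t q2 + t^2 q4) = tb qA + t (tb q2 + tb^2 q4) + t tb (t - tb) q4. *)
have t_ge0 : 0 <= t := le_trans (ltW tb_gt0) tb_le_t.
have tN_le := ler_wpM2l t_ge0 qN_le.
have q4_term_le : t * tb * (t - tb) * quad J4 x <= 0.
  by apply/mulr_ge0_le0/q4_le/mulr_ge0; [apply: mulr_ge0 | rewrite subr_ge0] => //; exact: ltW.
have tqA_le := ler_wpM2l (ltW tb_gt0) qA_le.
have tKA_lt : tb * KA * N < t * c * N by rewrite ltr_pM2r.
by rewrite -(pmulr_rlt0 _ tb_gt0); nra.
Qed.

Lemma cnorm1 : cnorm (1 : C) = 1.
Proof. exact: Normc.normc1. Qed.

Lemma cnormM (x y : C) : cnorm (x * y) = cnorm x * cnorm y.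
Proof. exact: Normc.normcM. Qed.

Lemma cnormX (x : C) k : cnorm (x ^+ k) = cnorm x ^+ k.
Proof.
elim: k => [|k IH]; first by rewrite !expr0 cnorm1.
by rewrite !exprS cnormM IH.
Qed.

Lemma cnorm_prod (r : seq C) (F : C -> C) :
  cnorm (\prod_(z <- r) F z) = \prod_(z <- r) cnorm (F z).
Proof. exact: (big_morph _ cnormM cnorm1). Qed.

Lemma cnorm_real (x : R) : cnorm (x%:C)%C = `|x|.
Proof. by rewrite /Num.norm /= expr0n /= addr0 sqrtr_sqr. Qed.

Lemma Re_le_cnorm (z : C) : Re z <= cnorm z.
Proof.
case: z => a b; rewrite /Num.norm /=; apply: le_trans (ler_norm a) _.
by rewrite -sqrtr_sqr ler_wsqrtr // lerDl sqr_ge0.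
Qed.

Lemma monic_root_cnorm_le (P : {poly C}) n z :
  size P = n.+1 -> P \is monic -> root P z -> cnorm z <= 1 + \sum_(i < n) cnorm P`_i.
Proof.
move=> sP /monicP; rewrite lead_coefE sP /= => Pn Pz.
have PzE : P.[z] = \sum_(i < n) P`_i * z ^+ i + z ^+ n.
  by rewrite horner_coef sP big_ord_recr /= Pn mul1r.
case: n sP Pn PzE => [|n] sP Pn PzE.
  by move: Pz; rewrite /root PzE big_ord0 add0r expr0 oner_eq0.
rewrite leNgt; apply/negP => z_big; set S := \sum_(i < n.+1) _ in z_big.
have S_ge0 : 0 <= S by rewrite sumr_ge0.
have z_ge1 : 1 <= cnorm z by apply/ltW/(le_lt_trans _ z_big); rewrite lerDl.
move/rootP: Pz; rewrite PzE => /eqP; rewrite addrC addr_eq0 => /eqP zn.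
have : cnorm z ^+ n.+1 <= S * cnorm z ^+ n.
  rewrite -cnormX zn normrN; apply: le_trans (ler_norm_sum _ _ _) _.
  rewrite /S mulr_suml; apply: ler_sum => i _; rewrite cnormM cnormX.
  by rewrite ler_wpM2l // ler_weXn2l // -ltnS.
by rewrite exprS ler_pM2r ?exprn_gt0 ?(lt_le_trans ltr01) //; lra.
Qed.

Lemma cnorm_horner_le (P : {poly C}) n e M w : (size P <= n.+1)%N ->
    (forall i, cnorm P`_i <= e) -> cnorm w <= M -> 1 <= M ->
  cnorm P.[w] <= n.+1%:R * e * M ^+ n.
Proof.
move=> sP Pe wM M_ge1; rewrite (horner_coef_wide _ sP).
apply: le_trans (ler_norm_sum _ _ _) _.
have -> : n.+1%:R * e * M ^+ n = \sum_(i < n.+1) e * M ^+ n.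
  by rewrite sumr_const card_ord -mulrA mulr_natl.
apply: ler_sum => i _; rewrite cnormM cnormX.
have M_ge0 : 0 <= M := le_trans ler01 M_ge1.
apply: ler_pM; rewrite ?exprn_ge0 //.
have i_le : (i <= n)%N by rewrite -ltnS.
by apply: le_trans (ler_weXn2l M_ge1 i_le); apply: lerXn2r; rewrite ?nnegrE.
Qed.

Lemma coef_XsubC_mul (a : C) (T : {poly C}) i :
  (('X - a%:P) * T)`_i = (if i == 0%N then 0 else T`_i.-1) - a * T`_i.
Proof. by rewrite mulrBl coefB coefXM coefCM. Qed.

Lemma coef1_XsubC_mul2 (a b : C) (T : {poly C}) :
  (('X - a%:P) * (('X - b%:P) * T))`_1 = - (a + b) * T`_0 + a * b * T`_1.
Proof. by rewrite !coef_XsubC_mul /=; ring. Qed.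

Lemma prod_XsubC_coef_le M (r : seq C) i : 0 <= M ->
    (forall z, z \in r -> cnorm z <= M) ->
  cnorm (\prod_(z <- r) ('X - z%:P))`_i <= (1 + M) ^+ size r.
Proof.
move=> M_ge0; elim: r i => [|a r IH] i r_le.
  by rewrite big_nil coef1; case: (i == 0%N); rewrite ?cnorm1 ?normr0.
have {}IH j : cnorm (\prod_(z <- r) ('X - z%:P))`_j <= (1 + M) ^+ size r.
  by apply: IH => z zr; apply: r_le; rewrite inE zr orbT.
rewrite big_cons coef_XsubC_mul exprS mulrDl mul1r.
apply: le_trans (ler_normB _ _) _; apply: lerD.
  by case: (i == 0%N); rewrite ?normr0 ?exprn_ge0 ?addr_ge0.
by rewrite cnormM ler_pM // r_le ?mem_head.
Qed.

Lemma prod_XsubC_horner_ge d (s : seq C) z : 0 <= d ->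
    (forall l, l \in s -> Re l <= - d) -> 0 <= Re z ->
  d ^+ size s <= cnorm (\prod_(l <- s) ('X - l%:P)).[z].
Proof.
move=> d_ge0 s_le z_ge0; rewrite horner_prod cnorm_prod.
elim: s s_le => [|l s IH] s_le; first by rewrite big_nil.
rewrite big_cons exprS hornerXsubC; apply: ler_pM; rewrite ?exprn_ge0 //.
  apply: le_trans (Re_le_cnorm _); have := s_le l (mem_head _ _).
  by move: z_ge0; rewrite raddfB /=; lra.
by apply: IH => l' l's; apply: s_le; rewrite inE l's orbT.
Qed.

(* A nonreal root comes with its conjugate; a real root t > 0 leaves a monic quotient
   with negative constant term, which has a positive root. *)
Lemma real_poly_second_right_root (p : {poly R}) (r : seq C) z :
    p \is monic -> 0 < p.[0] -> map_poly toC p = \prod_(w <- r) ('X - w%:P) ->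
    z \in r -> 0 <= Re z ->
  exists2 w, w \in rem z r & 0 <= Re w.
Proof.
move=> p_monic p0_gt0 pE zr z_right.
have pz : root (map_poly toC p) z by rewrite pE root_prod_XsubC.
have [Imz0|Imz_neq0] := eqVneq (Im z) 0; last first.
  exists z^*%C; last by case: (z) z_right.
  apply: rem_mem; first by apply: contra_neq Imz_neq0; case: (z) => a b [] /=; lra.
  rewrite -root_prod_XsubC -pE -complex_root_conj.
  by rewrite (_ : map_poly conjc _ = map_poly toC p) //; apply/polyP => i; rewrite !coef_map /= oppr0.
set t := Re z.
have zE : z = (t%:C)%C by move: Imz0; rewrite /t; case: (z) => a b /= ->.
have pt : root p t by move: pz; rewrite zE fmorph_root.
have t_gt0 : 0 < t.
  rewrite lt_def z_right andbT; apply: contraTneq p0_gt0 => t0.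
  by move: pt; rewrite t0 => /rootP ->; rewrite ltxx.
pose q := p %/ ('X - t%:P).
have pE' : p = q * ('X - t%:P) by rewrite divpK // dvdp_XsubCl.
have q_monic : q \is monic by rewrite -(monicMr _ (monicXsubC t)) -pE'.
have q0_lt0 : q.[0] < 0.
  by move: p0_gt0; rewrite pE' hornerM hornerXsubC sub0r mulrN oppr_gt0 pmulr_llt0.
have [u u_gt0 qu] := monic_root_gt0 q_monic q0_lt0.
exists (u%:C)%C; last exact: ltW.
have qE : map_poly toC q = \prod_(w <- rem z r) ('X - w%:P).
  apply: (@mulfI _ ('X - z%:P)); first by rewrite polyXsubC_eq0.
  rewrite [RHS](_ : _ = \prod_(w <- r) ('X - w%:P)); last by rewrite (big_rem _ zr).
  by rewrite -pE {1}pE' rmorphM /= map_polyXsubC mulrC zE.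
by rewrite -root_prod_XsubC -qE fmorph_root.
Qed.

Definition coef_close (p q : {poly R}) (e : R) := forall i, `|p`_i - q`_i| <= e.

Section SimpleRootPerturbation.
Variables (n : nat) (p0 : {poly R}) (s : seq C).
Hypothesis p0_size : size p0 = n.+1.
Hypothesis p0E : map_poly toC p0 = 'X * \prod_(l <- s) ('X - l%:P).
Hypothesis s_left : forall l, l \in s -> Re l < 0.

(* The roots of Q := p0 / 'X satisfy Re l <= - d, so |Q| >= g on the closed right half-plane. *)
Let d := - \big[Order.max/(-1)]_(l <- s) Re l.
Let g := d ^+ size s.
Let M := 1 + \sum_(i < n) (`|p0`_i| + 1).
Let K := n.+1%:R * M ^+ n.

Let d_gt0 : 0 < d.
Proof.
by rewrite oppr_gt0 big_seq; apply: bigmax_lt => [|l /s_left//]; rewrite ltrN10.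
Qed.

Let g_gt0 : 0 < g. Proof. exact: exprn_gt0. Qed.

Let M_ge1 : 1 <= M.
Proof. by rewrite lerDl sumr_ge0 // => i _; rewrite addr_ge0. Qed.

Let K_ge0 : 0 <= K.
Proof. by rewrite mulr_ge0 // exprn_ge0 // (le_trans ler01). Qed.

Let Q_right_ge z : 0 <= Re z -> g <= cnorm (\prod_(l <- s) ('X - l%:P)).[z].
Proof.
apply: prod_XsubC_horner_ge => [|l ls]; first exact: ltW.
by rewrite /d opprK; apply: le_bigmax_seq.
Qed.

Let p0_right_ge z : 0 <= Re z -> cnorm z * g <= cnorm (map_poly toC p0).[z].
Proof.
by move=> z_right; rewrite p0E hornerM hornerX cnormM ler_wpM2l ?normr_ge0 ?Q_right_ge.
Qed.

Let p0_coef1_ge : g <= `|p0`_1|.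
Proof.
rewrite -cnorm_real -coef_map p0E coefXM /= -horner_coef0; exact: Q_right_ge.
Qed.

Let close_root_cnorm_le (p : {poly R}) z : size p = n.+1 -> p \is monic ->
  coef_close p p0 1 -> root (map_poly toC p) z -> cnorm z <= M.
Proof.
move=> sp p_monic close pz; apply: le_trans (monic_root_cnorm_le _ _ pz) _.
- by rewrite size_map_poly sp.
- by rewrite map_monic.
rewrite lerD2l; apply: ler_sum => i _; rewrite coef_map cnorm_real.
by have := close i; have := ler_normD p0`_i (p`_i - p0`_i); rewrite addrC subrK; lra.
Qed.

Let close_right_root_small (p : {poly R}) e z : 0 <= e <= 1 -> size p = n.+1 ->
    p \is monic -> coef_close p p0 e -> root (map_poly toC p) z -> 0 <= Re z ->
  cnorm z * g <= e * K.
Proof.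
move=> /andP[e_ge0 e_le1] sp p_monic close pz z_right.
have close1 : coef_close p p0 1 by move=> i; apply: le_trans (close i) e_le1.
apply: le_trans (p0_right_ge z_right) _.
have -> : (map_poly toC p0).[z] = (map_poly toC (p0 - p)).[z].
  by rewrite rmorphB hornerD hornerN (rootP pz) subr0.
rewrite /K mulrCA mulrA; apply: cnorm_horner_le => [|i||//].
- by rewrite size_map_poly (leq_trans (size_polyD _ _)) // size_polyN p0_size sp maxnn.
- by rewrite coef_map cnorm_real coefB distrC.
- exact: close_root_cnorm_le close1 pz.
Qed.

Let r1 := K / g.
Let W := (1 + M) ^+ n.
Let L := 1 + r1 * (2 + r1) * W.

Let r1_ge0 : 0 <= r1. Proof. by rewrite divr_ge0 // ltW. Qed.
Let W_ge0 : 0 <= W. Proof. by rewrite exprn_ge0 // addr_ge0 // (le_trans ler01). Qed.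

Let close_two_right_roots (p : {poly R}) e z w T : 0 <= e <= 1 ->
    coef_close p p0 e -> map_poly toC p = ('X - z%:P) * (('X - w%:P) * T) ->
    cnorm z <= e * r1 -> cnorm w <= e * r1 -> (forall i, cnorm T`_i <= W) ->
  g <= e * L.
Proof.
move=> /andP[e_ge0 e_le1] close pE z_small w_small T_le.
have p1_le : `|p`_1| <= (cnorm z + cnorm w) * W + cnorm z * cnorm w * W.
  rewrite -cnorm_real -coef_map pE coef1_XsubC_mul2.
  apply: le_trans (ler_normD _ _) _; rewrite !cnormM normrN.
  apply: lerD; apply: ler_pM; rewrite ?mulr_ge0 ?normr_ge0 ?T_le ?ler_normD //.
have p1_ge : g - e <= `|p`_1|.
  have := close 1%N; have := ler_normD p`_1 (p0`_1 - p`_1).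
  by rewrite addrC subrK distrC; have := p0_coef1_ge; lra.
have zw_le : cnorm z * cnorm w <= e * (r1 * r1).
  apply: le_trans (ler_pM (normr_ge0 _) (normr_ge0 _) z_small w_small) _.
  by rewrite mulrACA; apply: ler_wpM2r; [exact: mulr_ge0 | exact: ler_piMr].
have := ler_wpM2r W_ge0 zw_le; have := ler_wpM2r W_ge0 (lerD z_small w_small).
by rewrite /L; nra.
Qed.

(* Two roots of p in the closed right half-plane would both be O(e) and make the
   linear coefficient of p O(e), whereas it is within e of p0`_1 = Q(0). A real p
   with p.[0] > 0 has such a second root as soon as it has one. *)
Lemma close_roots_left : exists2 e, 0 < e & forall p : {poly R},
    size p = n.+1 -> p \is monic -> coef_close p p0 e -> 0 < p.[0] ->
  forall z, root (map_poly toC p) z -> Re z < 0.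
Proof.
have L_gt0 : 0 < L.
  have := mulr_ge0 (mulr_ge0 r1_ge0 (addr_ge0 (ler0n _ 2) r1_ge0)) W_ge0.
  by rewrite /L; lra.
pose e := Num.min 1 (g / (2 * L)).
have e_gt0 : 0 < e by rewrite lt_min ltr01 divr_gt0 // mulr_gt0.
have e01 : 0 <= e <= 1 by rewrite ltW //= ge_min lexx.
have eL_lt : e * L < g.
  have : e * (2 * L) <= g by rewrite -ler_pdivlMr ?mulr_gt0 // ge_min lexx orbT.
  by nra.
exists e => // p sp p_monic close p0_gt0 z pz; rewrite ltNge; apply/negP => z_right.
have close1 : coef_close p p0 1.
  by move=> i; apply: le_trans (close i) _; case/andP: e01.
have small v : root (map_poly toC p) v -> 0 <= Re v -> cnorm v <= e * r1.
  move=> pv v_right; rewrite mulrA ler_pdivlMr //.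
  exact: close_right_root_small e01 sp p_monic close pv v_right.
have [r sr pE] := monic_polyC_split p_monic.
have zr : z \in r by rewrite -root_prod_XsubC -pE.
have [w wr w_right] := real_poly_second_right_root p_monic p0_gt0 pE zr z_right.
have pw : root (map_poly toC p) w by rewrite pE root_prod_XsubC (mem_rem wr).
set T := \prod_(v <- rem w (rem z r)) ('X - v%:P).
have pE' : map_poly toC p = ('X - z%:P) * (('X - w%:P) * T).
  by rewrite pE (big_rem _ zr) (big_rem _ wr).
have T_le i : cnorm T`_i <= W.
  have M_ge0 : 0 <= M := le_trans ler01 M_ge1.
  apply: le_trans (prod_XsubC_coef_le _ M_ge0 _) _ => [v vT|].
    apply: close_root_cnorm_le sp p_monic close1 _.
    by rewrite pE root_prod_XsubC (mem_rem (mem_rem vT)).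
  rewrite ler_weXn2l ?lerDl ?(le_trans ler01) // !size_rem // sr.
  by rewrite sp; apply: leq_trans (leq_pred _) (leq_pred _).
have := close_two_right_roots e01 close pE' (small z pz z_right) (small w pw w_right) T_le.
by rewrite leNgt eL_lt.
Qed.

End SimpleRootPerturbation.

Lemma polys_lipschitz0 (F : nat -> {poly R}) m : exists2 K, 0 <= K &
  forall i, (i < m)%N -> forall x, 0 <= x <= 1 -> `|(F i).[x] - (F i).[0]| <= x * K.
Proof.
elim: m => [|m [K K_ge0 FK]]; first by exists 0.
have [k k_ge1 Fk] := poly_lipshitz (F m) 0 1.
have k_ge0 : 0 <= k := le_trans ler01 k_ge1.
exists (K + k) => [|i]; first exact: addr_ge0.
rewrite ltnS leq_eqVlt => /predU1P[->|/FK Fi] x /andP[x_ge0 x_le1].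
  have := Fk 0 x; rewrite !in_itv /= lexx ler01 x_ge0 x_le1 subr0 (ger0_norm x_ge0).
  by move=> /(_ isT isT) /le_trans; apply; rewrite mulrC ler_wpM2l // lerDr.
by apply: le_trans (Fi x _) _; rewrite ?x_ge0 ?x_le1 // ler_wpM2l // lerDl.
Qed.

Lemma char_poly_horner_lipschitz n (P : 'M[{poly R}]_n) : exists2 K, 0 <= K &
  forall k, 0 <= k <= 1 -> coef_close (char_poly (map_mx (horner_eval k) P))
                                      (char_poly (map_mx (horner_eval 0) P)) (k * K).
Proof.
pose CP := char_poly P.
have [K K_ge0 CPK] := polys_lipschitz0 (fun i => CP`_i) (size CP).
exists K => // k k01 i; rewrite -!map_char_poly !coef_map /= !horner_evalE.
have [iCP|iCP] := ltnP i (size CP); first exact: CPK.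
by rewrite nth_default // !horner0 subr0 normr0 mulr_ge0 //; case/andP: k01.
Qed.

Definition quartic_mx n (A J2 J4 : 'M[R]_n) : 'M[{poly R}]_n :=
  \matrix_(i, j) ((A i j)%:P + 'X^2 * (J2 i j)%:P + 'X^4 * (J4 i j)%:P).

Lemma horner_quartic_mx n (A J2 J4 : 'M[R]_n) k :
  map_mx (horner_eval k) (quartic_mx A J2 J4) = A + k ^+ 2 *: J2 + k ^+ 4 *: J4.
Proof. by apply/matrixP => i j; rewrite !mxE /= horner_evalE !hornerE. Qed.

Lemma char_polyC_simple_root0 n (A : 'M[R]_n) s : \det A = 0 -> eigen_mset A s ->
    count (fun z => Re z < 0) s = n.-1 ->
  exists2 s', charC A = 'X * \prod_(l <- s') ('X - l%:P) & forall l, l \in s' -> Re l < 0.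
Proof.
rewrite /eigen_mset => detA0 AE count_s.
have s_size : size s = n.
  by have := size_prod_XsubC s id; rewrite -AE size_map_poly size_char_poly => -[].
have s0 : 0 \in s.
  rewrite -root_prod_XsubC -AE /root horner_map char_poly_horner0.
  by rewrite -scaleN1r detZ detA0 mulr0 rmorph0.
exists (rem 0 s); first by rewrite AE (big_rem _ s0) subr0.
have := permP (perm_to_rem s0) (fun z => Re z < 0).
rewrite count_s /= ltxx add0n => count_rem.
by apply/allP; rewrite all_count -count_rem size_rem // s_size.
Qed.

Lemma eigenvalue_Re_lt0_near0 n (A J2 J4 : 'M[R]_n) (s : seq C) kh : 0 < kh ->
    (forall k, 0 < k < kh -> 0 < \det (- (A + k ^+ 2 *: J2 + k ^+ 4 *: J4))) ->
    charC A = 'X * \prod_(l <- s) ('X - l%:P) -> (forall l, l \in s -> Re l < 0) ->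
  exists2 kk, 0 < kk & forall k, 0 < k < kk ->
    forall z, Defs.eigenvalue (A + k ^+ 2 *: J2 + k ^+ 4 *: J4) z -> Re z < 0.
Proof.
move=> kh_gt0 det_gt0 AE s_left.
have [e e_gt0 close_left] := close_roots_left (size_char_poly A) AE s_left.
have [K K_ge0 JK0] := char_poly_horner_lipschitz (quartic_mx A J2 J4).
have JK k : 0 <= k <= 1 ->
    coef_close (char_poly (A + k ^+ 2 *: J2 + k ^+ 4 *: J4)) (char_poly A) (k * K).
  by move/JK0; rewrite !horner_quartic_mx !expr0n /= !scale0r !addr0.
have K1_gt0 : 0 < K + 1 by rewrite ltr_wpDl.
exists (Num.min (Num.min 1 kh) (e / (K + 1))) => [|k].
  by rewrite !lt_min ltr01 kh_gt0 divr_gt0.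
rewrite !lt_min => /andP[k_gt0 /andP[/andP[k_lt1 k_lt_kh]]].
rewrite ltr_pdivlMr // => ke_lt z; apply: close_left.
- exact: size_char_poly.
- exact: char_poly_monic.
- move=> i; have /JK/(_ i)/le_trans -> // : 0 <= k <= 1 by rewrite !ltW.
  by apply: le_trans (ltW ke_lt); apply: ler_wpM2l; [exact: ltW | rewrite lerDl].
- by rewrite char_poly_horner0 det_gt0 // k_gt0.
Qed.

Lemma mem_gt0_of_inf_gt0 (E : set R) x : E x -> 0 < inf E -> 0 < x.
Proof.
move=> Ex inf_gt0; have [E_inf|E_noinf] := pselect (has_inf E).
  exact: lt_le_trans inf_gt0 (ge_inf E_inf.2 Ex).
by move: inf_gt0; rewrite inf_out // ltxx.
Qed.

Lemma mem_lt0_of_sup_lt0 (E : set R) x : E x -> sup E < 0 -> x < 0.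
Proof.
move=> Ex sup_lt0; have [E_sup|E_nosup] := pselect (has_sup E).
  exact: le_lt_trans (sup_upper_bound E_sup Ex) sup_lt0.
by move: sup_lt0; rewrite sup_out // ltxx.
Qed.

End RealMatrixSpectra.

Theorem theorem3 (R : realType) (n m : nat) (hn : (0 < n)%N) (hm : (0 < m)%N)
  (B : 'M[int]_(n, m)) (C : 'M[int]_(m, n)) (dl du : 'rV[R]_m)
  (J2 J4 : 'M[R]_n)
  (hdl : forall j, 0 <= dl ord0 j) (hdu : forall j, dl ord0 j <= du ord0 j)
  (hJ2 : symmetric_mx J2) (hJ4 : symmetric_mx J4)
  (* (A1) *)
  (A1_sing : forall d, in_box dl du d ->
     \det (intmx R B *m diag_mx d *m intmx R C) = 0)
  (A1_stab : forall d, in_box dl du d ->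
     exists s, eigen_mset (intmx R B *m diag_mx d *m intmx R C) s /\
       count (fun z : complex R => complex.Re z < 0) s = n.-1)
  (A1_v : exists v : 'cV[R]_n, v != 0 /\ (forall i, 0 <= v i ord0) /\
       v^T *m intmx R B = 0)
  (* (A2) *)
  (A2_J2 : indefinite J2) (A2_J4 : neg_semidef J4)
  (A2_kb : exists kb : R, neg_def (kb ^+ 2 *: J2 + kb ^+ 4 *: J4))
  (* hypotheses of the theorem *)
  (hPm : initially_positive (Psi_minus B C J2 J4 dl du))
  (hPp : negative_sign_change (Psi_plus B C J2 J4 dl du)) :
  forall d, in_box dl du d ->
    microphase_separation (fun k => spectral_abscissa (Jmat B C J2 J4 d k)).
Proof.
move=> d d_box; set A := intmx R B *m diag_mx d *m intmx R C.
have Jdet k : [set \det (- Jmat B C J2 J4 d' k) | d' in [set d' | in_box dl du d']]%classic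
                (\det (- (A + k ^+ 2 *: J2 + k ^+ 4 *: J4))) by exists d.
have [kh [kh_gt0 Pm_gt0]] := hPm.
have [s [As count_s]] := A1_stab d d_box.
have [s' AE s'_left] := char_polyC_simple_root0 (A1_sing d d_box) As count_s.
have [kk kk_gt0 near0_left] := eigenvalue_Re_lt0_near0 kh_gt0
  (fun k hk => mem_gt0_of_inf_gt0 (Jdet k) (Pm_gt0 k hk)) AE s'_left.
have [k1 [k2 [k1_ge0 [k12 [_ Pp_lt0]]]]] := hPp.
have k2_gt0 : 0 < k2 := le_lt_trans k1_ge0 k12.
have [k3 k23 J3_neg] := neg_def_large A k2 hn A2_J4 A2_kb.
exists (Num.min kk (k2 / 2)); split; first by rewrite lt_min kk_gt0 divr_gt0.
split=> [k /andP[k_gt0]|]; first rewrite lt_min => /andP[k_lt_kk _].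
  by apply: spectral_abscissa_lt hn _ => z; apply: near0_left; rewrite k_gt0.
exists k2, k3; split; first by rewrite gt_min ltr_pdivrMr // ltr_pMr ?ltr1n ?orbT.
split=> //; split; last first.
  by apply: spectral_abscissa_lt hn _ => z; exact: neg_def_eigenvalue_Re_lt0.
exact/spectral_abscissa_gt0/(mem_lt0_of_sup_lt0 (Jdet k2)).
Qed.
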